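(* There exist parameter classes $\Phi,\Psi$ and ground truth $\phi^*\in\Phi,\psi^*\in\Psi$ (with $x,y,z$ taking values in the positive integers and no side information) such that for every constant $c>0$ there exist $m,n\ge c$ for which, with probability at least $\frac12(1-e^{-1})e^{-1}$, the output $(\hat\phi,\hat\psi)$ of the two-phase MLE algorithm satisfies $$d_{\mathrm{TV}}\big(\mathbb P_{\hat\phi,\hat\psi}(x,y),\mathbb P_{\phi^*,\psi^*}(x,y)\big)\ge\frac18.$$
   Context: Setup: $\Phi$ indexes joint distributions $\mathbb P_\phi(x,z)$ and $\Psi$ indexes conditional distributions $\mathbb P_\psi(y\mid z)$; $\mathbb P_{\phi,\psi}(x,y)=\sum_z\mathbb P_\phi(x,z)\mathbb P_\psi(y\mid z)$. Data: $m$ i.i.d. unlabeled $x_i\sim\mathbb P_{\phi^*}(x)$ and independent $n$ i.i.d. labeled $(x_j,y_j)\sim\mathbb P_{\phi^*,\psi^*}(x,y)$. Two-phase MLE algorithm: $\hat\phi\in\arg\max_{\phi\in\Phi}\sum_{i=1}^m\log p_\phi(x_i)$, then $\hat\psi\in\arg\max_{\psi\in\Psi}\sum_{j=1}^n\log p_{\hat\phi,\psi}(x_j,y_j)$. $d_{\mathrm{TV}}(P,Q)=\frac12\sum|p-q|$. *)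

From HB Require Import structures.
From mathcomp Require Import all_boot all_order all_algebra.
From mathcomp Require Import all_classical all_reals all_analysis.
Set Implicit Arguments. Unset Strict Implicit. Unset Printing Implicit Defensive.
Import Order.TTheory GRing.Theory Num.Theory.
Local Open Scope classical_set_scope.
Local Open Scope ring_scope.

(* The value spaces of x, y, z (positive integers) are represented by nat
   (relabeling k |-> k-1). *)

Section TwoPhase.
Variable R : realType.

Definition is_joint_pmf (phi : nat -> nat -> R) : Prop :=
  (forall x z, 0 <= phi x z) /\
  \esum_(xz in [set: nat * nat]) (phi xz.1 xz.2)%:E = 1%:E.

Definition is_cond_pmf (psi : nat -> nat -> R) : Prop :=
  (forall z y, 0 <= psi z y) /\
  forall z, \esum_(y in [set: nat]) (psi z y)%:E = 1%:E.

Definition marg (phi : nat -> nat -> R) (x : nat) : R :=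
  fine (\esum_(z in [set: nat]) (phi x z)%:E).

Definition joint (phi psi : nat -> nat -> R) (x y : nat) : R :=
  fine (\esum_(z in [set: nat]) (phi x z * psi z y)%:E).

Definition dTV (p q : nat -> nat -> R) : \bar R :=
  (2^-1)%:E * \esum_(xy in [set: nat * nat]) (`|p xy.1 xy.2 - q xy.1 xy.2|)%:E.

(* likelihoods (maximizing the product = maximizing the sum of logs,
   with log 0 = -oo) *)
Definition lik1 (phi : nat -> nat -> R) (xs : seq nat) : R :=
  \prod_(x <- xs) marg phi x.

Definition lik2 (phi psi : nat -> nat -> R) (ds : seq (nat * nat)) : R :=
  \prod_(d <- ds) joint phi psi d.1 d.2.

Definition mle1 (Phi : set (nat -> nat -> R)) (xs : seq nat)
    (phih : nat -> nat -> R) : Prop :=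
  Phi phih /\ forall phi, Phi phi -> lik1 phi xs <= lik1 phih xs.

Definition mle2 (Psi : set (nat -> nat -> R)) (phih : nat -> nat -> R)
    (ds : seq (nat * nat)) (psih : nat -> nat -> R) : Prop :=
  Psi psih /\ forall psi, Psi psi -> lik2 phih psi ds <= lik2 phih psih ds.

Definition sample_weight (phis psis : nat -> nat -> R) (m n : nat)
    (s : m.-tuple nat * n.-tuple (nat * nat)) : R :=
  (\prod_(x <- s.1) marg phis x) * (\prod_(d <- s.2) joint phis psis d.1 d.2).

Definition sample_prob (phis psis : nat -> nat -> R) (m n : nat)
    (E : set (m.-tuple nat * n.-tuple (nat * nat))) : \bar R :=
  \esum_(s in E) (sample_weight phis psis s)%:E.

Definition mle_fails (Phi Psi : set (nat -> nat -> R)) (phis psis : nat -> nat -> R)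
    (m n : nat) : set (m.-tuple nat * n.-tuple (nat * nat)) :=
  [set s : m.-tuple nat * n.-tuple (nat * nat) | (exists phih, mle1 Phi s.1 phih) /\
           (forall phih, mle1 Phi s.1 phih -> exists psih, mle2 Psi phih s.2 psih) /\
           (forall phih psih, mle1 Phi s.1 phih -> mle2 Psi phih s.2 psih ->
              ((8^-1)%:E <= dTV (joint phih psih) (joint phis psis))%E)].

End TwoPhase.

Arguments mle_fails {R} Phi Psi phis psis m n.
Arguments sample_prob {R} phis psis {m n} E.
Arguments sample_weight {R} phis psis {m n} s.

From HB Require Import structures.
From mathcomp Require Import all_boot all_order all_algebra.
From mathcomp Require Import all_classical all_reals all_analysis.
From mathcomp Require Import lra.
Import Order.TTheory GRing.Theory Num.Theory.
Local Open Scope classical_set_scope.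
Local Open Scope ring_scope.

(* The truth draws x from the geometric law P(x = k) = 2^-(k+1), sets z = x
   and labels y = z.  Besides the truth, Phi contains for every j > 0 a model
   whose x-marginal moves the mass of j onto 0 and whose latent is z = x + 1.
   As soon as 0 occurs among the unlabeled points, the shifted model for the
   smallest unobserved j > 0 has strictly larger likelihood than the truth, so
   phase 1 always returns a shifted model.  The only channel y = z then never
   outputs (0, 0), which has true mass 1/2, so the TV distance is >= 1/4.
   Samples whose first unlabeled point is 0 have probability 1/2; restricting
   them to values below m + n (a finite sum) and applying Bernoulli's
   inequality still leaves probability >= 1/4, which exceeds the constant
   (1 - e^-1) e^-1 / 2. *)

Section Esum.
Context {R : realType}.

Lemma esumT_single (T : choiceType) (f : T -> R) t :
  0 <= f t -> (forall i, i != t -> f i = 0) ->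
  \esum_(i in [set: T]) (f i)%:E = (f t)%:E.
Proof.
move=> f0 fz; rewrite (esumID [set t]); last first.
  by move=> i _; case: (eqVneq i t) => [->|/fz ->]; rewrite lee_fin.
rewrite setTI esum_set1 ?lee_fin// esum1 ?adde0// => i [_ /= it].
by rewrite fz//; apply/eqP.
Qed.

Lemma esumT_split1 (T : choiceType) (f : T -> \bar R) t :
  (forall i, (0 <= f i)%E) ->
  \esum_(i in [set: T]) f i =
  (f t + \esum_(i in [set: T]) if i == t then 0 else f i)%E.
Proof.
move=> f0; rewrite (esumID [set t]) // setTI esum_set1 // esum_mkcondr.
congr (_ + _)%E; apply: eq_esum => i _; rewrite in_setC /=.
by case: (eqVneq i t) => [->|it]; rewrite ?in_set1 ?eqxx//= (negPf it).
Qed.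

Lemma eq_esumT_off2 {T : choiceType} {f g : T -> \bar R} {a b : T} :
  a != b -> (forall i, (0 <= f i)%E) -> (forall i, (0 <= g i)%E) ->
  (f a + f b = g a + g b)%E -> (forall i, i != a -> i != b -> f i = g i) ->
  \esum_(i in [set: T]) f i = \esum_(i in [set: T]) g i.
Proof.
move=> ab f0 g0 fgab fg.
have split2 (h : T -> \bar R) : (forall i, (0 <= h i)%E) ->
    \esum_(i in [set: T]) h i = (h a + h b + \esum_(i in [set: T])
      if i == b then 0 else if i == a then 0 else h i)%E.
  move=> h0; rewrite (esumT_split1 _ _ a) // (esumT_split1 _ _ b).
    by rewrite eq_sym (negPf ab) addeA.
  by move=> i; case: ifP.
rewrite (split2 f) // (split2 g) // fgab; congr (_ + _)%E.
apply: eq_esum => i _.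
by case: (eqVneq i b) => // ib; case: (eqVneq i a) => // ia; rewrite fg.
Qed.

Lemma esumT_pair (T1 T2 : choiceType) (a : T1 -> T2 -> \bar R) :
  (forall i j, (0 <= a i j)%E) ->
  \esum_(k in [set: T1 * T2]) a k.1 k.2 =
  \esum_(i in [set: T1]) \esum_(j in [set: T2]) a i j.
Proof.
move=> a0; rewrite (esum_esum (I := setT) (J := fun _ => setT)) //.
by congr esum; apply/seteqP; split => -[i j].
Qed.

End Esum.

Lemma bernoulli_inequality {R : realDomainType} {t : R} L :
  0 <= t <= 1 -> 1 - L%:R * t <= (1 - t) ^+ L.
Proof.
move=> /andP[t0 t1]; elim: L => [|L IH]; first by rewrite mul0r subr0 expr0.
rewrite exprSr; apply: le_trans (_ : (1 - L%:R * t) * (1 - t) <= _).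
  have : 0 <= L%:R * t * t by rewrite !mulr_ge0.
  by rewrite -natr1; nra.
by rewrite ler_wpM2r // subr_ge0.
Qed.

Section Geometric.
Variable R : realType.

Definition geom (k : nat) : R := 2^-1 ^+ k.+1.

Lemma geom_gt0 k : 0 < geom k.
Proof. exact: exprn_gt0. Qed.

Lemma geom_ge0 k : 0 <= geom k.
Proof. exact/ltW/geom_gt0. Qed.

Lemma geom0 : geom 0 = 2^-1.
Proof. by rewrite /geom expr1. Qed.

Lemma geom_le j k : (j <= k)%N -> geom k <= geom j.
Proof. by move=> jk; apply: ler_wiXn2l => //; lra. Qed.

Lemma esum_geom : \esum_(k in [set: nat]) (geom k)%:E = 1%E.
Proof.
rewrite -nneseries_esumT; last by move=> k; rewrite lee_fin geom_ge0.
apply: cvg_lim => //; have := @cvg_geometric_eseries_half R 1 0.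
rewrite expr0 divr1; apply: cvg_trans; apply: near_eq_cvg; apply: nearW => K.
by apply: eq_bigr => k _; rewrite /geom div1r natrX exprVn addn1.
Qed.

Lemma sum_geom K : \sum_(k < K) geom k = 1 - 2^-1 ^+ K.
Proof.
elim: K => [|K IH]; first by rewrite big_ord0 expr0 subrr.
by rewrite big_ord_recr /= IH /geom !exprS; lra.
Qed.

Lemma geom_tail_pow_ge L : 2^-1 <= (1 - 2^-1 ^+ L.+1) ^+ L :> R.
Proof.
have h01 : 0 <= (2^-1 : R) ^+ L.+1 <= 1.
  by rewrite exprn_ge0 //= exprn_ile1 //; lra.
apply: le_trans (bernoulli_inequality L h01).
have u0 : 0 < (2 : R) ^+ L by rewrite exprn_gt0.
have Lu : L%:R / 2 ^+ L <= 1 :> R.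
  by rewrite ler_pdivrMr // mul1r -natrX ler_nat ltnW // ltn_expl.
have -> : L%:R * 2^-1 ^+ L.+1 = L%:R / 2 ^+ L / 2 :> R.
  by rewrite exprS exprVn mulrCA mulrC.
lra.
Qed.

End Geometric.

Section Model.
Variable R : realType.

Definition phi_true (x z : nat) : R := if z == x then geom R x else 0.

Definition marg_shift (j x : nat) : R :=
  if x == 0%N then geom R 0 + geom R j else if x == j then 0 else geom R x.

Definition phi_shift (j x z : nat) : R :=
  if z == x.+1 then marg_shift j x else 0.

Definition psi_id (z y : nat) : R := if y == z then 1 else 0.

Definition Phi_model : set (nat -> nat -> R) :=
  [set phi | phi = phi_true \/ exists2 j, (0 < j)%N & phi = phi_shift j].

Definition Psi_model : set (nat -> nat -> R) := [set psi_id].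

Lemma marg_shift_ge0 j x : 0 <= marg_shift j x.
Proof.
rewrite /marg_shift; case: ifP => _; first by rewrite addr_ge0 ?geom_ge0.
by case: ifP => _ //; rewrite geom_ge0.
Qed.

Lemma marg_phi_true x : marg phi_true x = geom R x.
Proof.
rewrite /marg (esumT_single _ _ x) /phi_true ?eqxx ?geom_ge0 //.
by move=> i /negPf ->.
Qed.

Lemma marg_phi_shift j x : marg (phi_shift j) x = marg_shift j x.
Proof.
rewrite /marg (esumT_single _ _ x.+1) /phi_shift ?eqxx ?marg_shift_ge0 //.
by move=> i /negPf ->.
Qed.

Lemma joint_phi_true_psi_id x y :
  joint phi_true psi_id x y = if y == x then geom R x else 0.
Proof.
rewrite /joint (esumT_single _ _ x) /phi_true /psi_id ?eqxx.
- by case: ifP; rewrite ?mulr1 ?mulr0.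
- by case: ifP; rewrite ?mulr1 ?mulr0 // geom_ge0.
- by move=> i /negPf ->; rewrite mul0r.
Qed.

Lemma joint_phi_shift_psi_id00 j : joint (phi_shift j) psi_id 0 0 = 0.
Proof.
rewrite /joint (esumT_single _ _ 0%N) /phi_shift /psi_id ?eqxx //= ?mul0r //.
by move=> i; rewrite eq_sym => /negPf ->; rewrite mulr0.
Qed.

Lemma joint_pmf_phi_true : is_joint_pmf phi_true.
Proof.
have phi0 x z : 0 <= phi_true x z.
  by rewrite /phi_true; case: ifP; rewrite ?geom_ge0.
split=> //; rewrite (esumT_pair _ _ (fun x z => (phi_true x z)%:E)); last first.
  by move=> x z; rewrite lee_fin.
rewrite -esum_geom; apply: eq_esum => x _.
rewrite (esumT_single _ _ x) /phi_true ?eqxx ?geom_ge0 //.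
by move=> i /negPf ->.
Qed.

Lemma joint_pmf_phi_shift j : (0 < j)%N -> is_joint_pmf (phi_shift j).
Proof.
move=> j0; have phi0 x z : 0 <= phi_shift j x z.
  by rewrite /phi_shift; case: ifP; rewrite ?marg_shift_ge0.
split=> //.
rewrite (esumT_pair _ _ (fun x z => (phi_shift j x z)%:E)); last first.
  by move=> x z; rewrite lee_fin.
rewrite -esum_geom (eq_esum (b := fun x => (marg_shift j x)%:E)); last first.
  move=> x _.
  rewrite (esumT_single _ _ x.+1) /phi_shift ?eqxx ?marg_shift_ge0 //.
  by move=> i /negPf ->.
have j0' : (0 != j)%N by rewrite eq_sym -lt0n.
apply: (eq_esumT_off2 j0') => [x|x||x x0 xj];
  rewrite ?lee_fin ?marg_shift_ge0 ?geom_ge0 //.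
  by rewrite /marg_shift eqxx eq_sym (negPf j0') eqxx -EFinD addr0.
by rewrite /marg_shift (negPf x0) (negPf xj).
Qed.

Lemma cond_pmf_psi_id : is_cond_pmf psi_id.
Proof.
split=> [z y|z]; first by rewrite /psi_id; case: ifP.
by rewrite (esumT_single _ _ z) /psi_id ?eqxx // => i /negPf ->.
Qed.

Lemma dTV_phi_shift_ge j :
  ((8^-1 : R)%:E <= dTV (joint (phi_shift j) psi_id) (joint phi_true psi_id))%E.
Proof.
have mass00 : ((2^-1 : R)%:E <= \esum_(xy in [set: nat * nat])
    (`|joint (phi_shift j) psi_id xy.1 xy.2 -
       joint phi_true psi_id xy.1 xy.2|)%:E)%E.
  apply: esum_ge; exists [set (0%N, 0%N)]; first by split; [exact: finite_set1|].
  rewrite fsbig_set1 /= joint_phi_shift_psi_id00 joint_phi_true_psi_id eqxx geom0.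
  by rewrite sub0r normrN ger0_norm.
apply: le_trans (_ : ((2^-1 : R)%:E * (2^-1 : R)%:E <= _)%E).
  by rewrite -EFinM lee_fin; lra.
by rewrite lee_pmul2l // lte_fin.
Qed.

Lemma lik1_phi_true xs : lik1 phi_true xs = \prod_(x <- xs) geom R x.
Proof. by apply: eq_bigr => x _; rewrite marg_phi_true. Qed.

Lemma lik1_phi_shift_seen j xs :
  (0 < j)%N -> j \in xs -> lik1 (phi_shift j) xs = 0.
Proof.
move=> j0 jxs; rewrite /lik1 (big_rem j) //= marg_phi_shift /marg_shift.
by rewrite eqxx eqn0Ngt j0 mul0r.
Qed.

Lemma lik1_phi_shift_unseen j xs : j \notin xs ->
  lik1 (phi_shift j) xs =
  \prod_(x <- xs) (if x == 0%N then geom R 0 + geom R j else geom R x).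
Proof.
move=> jxs; apply: eq_big_seq => x xxs; rewrite marg_phi_shift /marg_shift.
case: ifP => // _; case: (eqVneq x j) => // xj.
by rewrite -xj xxs in jxs.
Qed.

Lemma lik1_phi_true_lt_shift j xs : 0%N \in xs -> j \notin xs ->
  lik1 phi_true xs < lik1 (phi_shift j) xs.
Proof.
move=> x0 jxs; rewrite lik1_phi_true lik1_phi_shift_unseen //.
rewrite (big_rem 0%N) // [X in _ < X](big_rem 0%N) //=.
set a := \prod_(y <- _) geom R y; set b := \prod_(y <- _) _.
have a0 : 0 < a by apply: prodr_gt0 => y _; exact: geom_gt0.
have ab : a <= b.
  apply: ler_prod => y _; rewrite geom_ge0 /=.
  by case: ifP => [/eqP ->|_]; rewrite ?lerDl ?geom_ge0.
apply: le_lt_trans (_ : geom R 0 * b < _); first by rewrite ler_pM2l ?geom_gt0.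
by rewrite ltr_pM2r ?ltrDl ?geom_gt0 // (lt_le_trans a0 ab).
Qed.

Lemma lik1_phi_shift_le j k xs : (k <= j)%N -> j \notin xs -> k \notin xs ->
  lik1 (phi_shift j) xs <= lik1 (phi_shift k) xs.
Proof.
move=> kj jxs kxs; rewrite !lik1_phi_shift_unseen //.
apply: ler_prod => x _; case: ifP => _; last by rewrite geom_ge0 lexx.
by rewrite addr_ge0 ?geom_ge0 //= lerD2l geom_le.
Qed.

Lemma exists_unseen (xs : seq nat) : exists j, (0 < j)%N && (j \notin xs).
Proof.
exists (\max_(x <- xs) x).+1; apply/negP => mxs.
by have := leq_bigmax_seq (F := id) (P := xpredT) _ mxs isT; rewrite ltnn.
Qed.

Definition first_unseen (xs : seq nat) : nat := ex_minn (exists_unseen xs).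

Lemma mle1_phi_shift_first_unseen {xs} :
  0%N \in xs -> mle1 Phi_model xs (phi_shift (first_unseen xs)).
Proof.
rewrite /first_unseen; case: ex_minnP => k /andP[k0 kxs] kmin x0.
split=> [|_ [->|[j j0 ->]]]; first by right; exists k.
  exact/ltW/lik1_phi_true_lt_shift.
have [jxs|jxs] := boolP (j \in xs).
  rewrite lik1_phi_shift_seen // prodr_ge0 // => x _.
  by rewrite marg_phi_shift marg_shift_ge0.
by apply: lik1_phi_shift_le => //; apply: kmin; rewrite j0.
Qed.

Lemma mle1_Phi_model_shift {xs phih} : 0%N \in xs ->
  mle1 Phi_model xs phih -> exists2 j, (0 < j)%N & phih = phi_shift j.
Proof.
move=> x0 [[->|//] phih_max].
have := phih_max _ (proj1 (mle1_phi_shift_first_unseen x0)).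
rewrite leNgt lik1_phi_true_lt_shift //.
by rewrite /first_unseen; case: ex_minnP => k /andP[].
Qed.

Lemma mle_fails_of_seen0 m n (s : m.-tuple nat * n.-tuple (nat * nat)) :
  0%N \in (s.1 : seq nat) -> mle_fails Phi_model Psi_model phi_true psi_id m n s.
Proof.
move=> x0; have psi_id_mle2 phih : mle2 Psi_model phih s.2 psi_id.
  by split=> // psi ->.
split; first by exists (phi_shift (first_unseen s.1));
  exact: mle1_phi_shift_first_unseen.
split=> [phih _|phih psih /(mle1_Phi_model_shift x0) [j _ ->] [-> _]].
  by exists psi_id; exact: psi_id_mle2.
exact: dTV_phi_shift_ge.
Qed.

End Model.

(* Samples whose first unlabeled point is 0 and whose other points are drawn
   from [0, K), indexed by finite functions so that their weight is a finite
   sum. *)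
Definition trunc_sample (N n K : nat)
    (d : {ffun 'I_N -> 'I_K} * {ffun 'I_n -> 'I_K}) :
  N.+1.-tuple nat * n.-tuple (nat * nat) :=
  (cons_tuple 0%N (map_tuple (fun i => val (d.1 i)) (ord_tuple N)),
   map_tuple (fun i => (val (d.2 i), val (d.2 i))) (ord_tuple n)).

Lemma trunc_sample_inj N n K : injective (trunc_sample N n K).
Proof.
move=> [a1 b1] [a2 b2] /= [/eq_in_map e1 /eq_in_map e2].
congr pair; apply/ffunP => i; apply: val_inj.
  by apply: e1; rewrite mem_enum.
by have := e2 i; rewrite mem_enum => /(_ isT) [].
Qed.

Section Probability.
Variable R : realType.

Lemma sample_weight_trunc_sample N n K d :
  sample_weight (phi_true R) (psi_id R) (trunc_sample N n K d) =
  geom R 0 * \prod_i geom R (d.1 i) * \prod_i geom R (d.2 i).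
Proof.
rewrite /sample_weight /trunc_sample /= big_cons marg_phi_true.
rewrite !big_map -!enumT !big_enum.
congr (_ * _ * _); apply: eq_bigr => i _; first by rewrite marg_phi_true.
by rewrite joint_phi_true_psi_id eqxx.
Qed.

Lemma sum_sample_weight_trunc_sample N n K :
  \sum_(d : {ffun 'I_N -> 'I_K} * {ffun 'I_n -> 'I_K})
     sample_weight (phi_true R) (psi_id R) (trunc_sample N n K d) =
  geom R 0 * (\sum_(k < K) geom R k) ^+ N * (\sum_(k < K) geom R k) ^+ n.
Proof.
under eq_bigr do rewrite sample_weight_trunc_sample.
rewrite -(pair_bigA _
  (fun (a : {ffun 'I_N -> 'I_K}) (b : {ffun 'I_n -> 'I_K}) =>
     geom R 0 * \prod_i geom R (a i) * \prod_i geom R (b i))) /=.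
under eq_bigr do rewrite -mulr_sumr.
rewrite -mulr_suml -mulr_sumr.
rewrite -!(bigA_distr_bigA (fun (i : 'I__) (k : 'I_K) => geom R k)) /=.
by rewrite !prodr_const !card_ord.
Qed.

Lemma sample_prob_mle_fails_ge N n :
  ((4^-1 : R)%:E <= sample_prob (phi_true R) (psi_id R)
    (mle_fails (Phi_model R) (Psi_model R) (phi_true R) (psi_id R) N.+1 n))%E.
Proof.
pose K := (N + n).+1.
apply: esum_ge; exists (trunc_sample N n K @` setT).
  split; first exact: finite_image finite_finset.
  by move=> s [d _ <-]; apply: mle_fails_of_seen0; rewrite /= in_cons eqxx.
rewrite fsbig_image; last by move=> ? ? _ _; apply: trunc_sample_inj.
have -> : [set: {ffun 'I_N -> 'I_K} * {ffun 'I_n -> 'I_K}] =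
    [set` enum {: {ffun 'I_N -> 'I_K} * {ffun 'I_n -> 'I_K}}].
  by apply/seteqP; split => x //= _; rewrite mem_enum.
rewrite -fsbig_seq ?enum_uniq // big_enum /= sumEFin lee_fin.
rewrite sum_sample_weight_trunc_sample sum_geom -mulrA -exprD geom0.
have := geom_tail_pow_ge R (N + n); rewrite /K; lra.
Qed.

End Probability.

Theorem mainTheorem18 (R : realType) :
  exists (Phi Psi : set (nat -> nat -> R)) (phis psis : nat -> nat -> R),
    (forall phi, Phi phi -> is_joint_pmf phi) /\
    (forall psi, Psi psi -> is_cond_pmf psi) /\
    Phi phis /\ Psi psis /\
    forall c : R, 0 < c ->
      exists m n : nat, c <= m%:R /\ c <= n%:R /\
        ((2^-1 * (1 - expR (-1)) * expR (-1))%:E <=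
           sample_prob phis psis (mle_fails Phi Psi phis psis m n))%E.
Proof.
exists (Phi_model R), (Psi_model R), (phi_true R), (psi_id R).
split; first by move=> phi [->|[j j0 ->]];
  [exact: joint_pmf_phi_true|exact: joint_pmf_phi_shift].
split; first by move=> psi ->; exact: cond_pmf_psi_id.
split; first by left.
split=> // c c0; exists (Num.truncn c).+1, (Num.truncn c).+1.
have c_le : c <= (Num.truncn c).+1%:R by exact/ltW/truncnS_gt.
do 2!split=> //; apply: le_trans (sample_prob_mle_fails_ge _ _ _).
by rewrite lee_fin; have := expR_gt0 (-1 : R); nra.
Qed.
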